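(* Assume $2\mu\bar c>\sigma^2 r$. There is a constant $K>0$, independent of $n$ and $i$, such that for every $n\in\mathbb N$ the solution $v_0,\dots,v_n$ of the regime-switching system satisfies $0\le v_i'\le K$ on $[0,\infty)$ for $i=0,\dots,n$.
   Context: Constants: $\mu\in\mathbb R$, $\sigma>0$, $r>0$, $\bar c\in(0,\mu]$, $b\in[0,1]$. Operators: $\mathcal L w=\tfrac12\sigma^2w''+\mu w'-rw$, $\mathcal T w=b(1-w')+(1-b)(1-w')^+$. Regime-switching system: for $n\in\mathbb N$ let $\Delta c=\bar c/n$, $c_i=\bar c-i\Delta c$ ($i=0,\dots,n$), $v_{-1}\equiv0$; find bounded functions $v_0,\dots,v_n$ on $[0,\infty)$, $v_i\in W^2_{p,\mathrm{loc}}([0,\infty))$ for all $p>1$, with $\min\{-\mathcal Lv_i-c_i\,\mathcal Tv_i,\ v_i-v_{i-1}\}=0$ a.e. on $(0,\infty)$ and $v_i(0)=0$, for $i=0,\dots,n$ (such a solution exists and is unique). *)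

From HB Require Import structures.
From mathcomp Require Import all_boot all_order all_algebra.
From mathcomp Require Import all_classical all_reals all_analysis.
Set Implicit Arguments. Unset Strict Implicit. Unset Printing Implicit Defensive.
Import Order.TTheory GRing.Theory Num.Theory.
Import numFieldNormedType.Exports.
Local Open Scope classical_set_scope.
Local Open Scope ring_scope.

Section Defs.
Variable R : realType.
Notation mu := (@lebesgue_measure R).

(* Sobolev regularity W^2_{p,loc}([0,oo)) for every p > 1, expressed through an
   explicit first derivative [d] (continuous) and weak second derivative [w]:
     v x = v 0 + int_0^x d,   d x = d 0 + int_0^x w   (x >= 0),
   with w measurable and locally L^p on [0,oo) for every p > 1. *)
Definition W2loc_repr (v d w : R -> R) : Prop :=
  measurable_fun [set x : R | 0 <= x] w /\
  (forall (a p : R), 0 < a -> 1 < p ->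
     (\int[mu]_(x in `[0%R, a]) ((`|w x| `^ p)%:E) < +oo)%E) /\
  (forall x : R, 0 <= x ->
     mu.-integrable `[0, x] (fun t => (w t)%:E) /\
     mu.-integrable `[0, x] (fun t => (d t)%:E) /\
     v x = v 0 + Rintegral mu `[0, x] d /\
     d x = d 0 + Rintegral mu `[0, x] w).

Definition gen_L (m sigma r : R) (v d w : R -> R) (x : R) : R :=
  2^-1 * sigma ^+ 2 * w x + m * d x - r * v x.

Definition op_T (b : R) (d : R -> R) (x : R) : R :=
  b * (1 - d x) + (1 - b) * Num.max (1 - d x) 0.

Definition cc (cbar : R) (n i : nat) : R := cbar - i%:R * (cbar / n%:R).

Definition vprev (v : nat -> R -> R) (i : nat) : R -> R :=
  if i is i'.+1 then v i' else (fun _ => 0).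

Definition solves_system (m sigma r cbar b : R) (n : nat)
    (v d w : nat -> R -> R) : Prop :=
  forall i : nat, (i <= n)%N ->
    W2loc_repr (v i) (d i) (w i) /\
    (exists M : R, forall x : R, 0 <= x -> `|v i x| <= M) /\
    v i 0 = 0 /\
    {ae mu, forall x : R, 0 < x ->
       Num.min (- gen_L m sigma r (v i) (d i) (w i) x
                - cc cbar n i * op_T b (d i) x)
               (v i x - vprev v i x) = 0}.

End Defs.

From HB Require Import structures.
From mathcomp Require Import all_boot all_order all_algebra.
From mathcomp Require Import all_classical all_reals all_analysis.
From mathcomp Require Import ring lra.
(* Let [V x = cbar / r * (1 - exp (- la x))] with [la = 1 + (m + r) / (sigma^2 / 2)]:
   it solves [sigma^2/2 V'' + m V' - r V + cbar <= 0], and [la >= 1]. By induction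
   on [i], [0 <= v_(i-1) <= v_i <= V] and [0 <= v_i' <= K := max 1 (cbar la / r)].
   Where [v_i > v_(i-1)], the derivative [p = v_i'] is [C^1] and
   [sigma^2/2 p' = r v_i - m p - c_i T p]; at contact points [p = v_(i-1)'].
   A maximum principle against [V + eps (x + m / r (1 - exp (- la x)))] gives
   [v_i <= V], hence [p 0 <= cbar la / r]. A negative local minimum of [p] would
   lie in the continuation region with [p' = 0] and [p'' = r p / (sigma^2/2) < 0];
   a maximum of [p] above [K >= 1] would have [sigma^2/2 p' <= r v_i - m < cbar - m
   <= 0]. *)

Set Implicit Arguments. Unset Strict Implicit. Unset Printing Implicit Defensive.
Import Order.TTheory GRing.Theory Num.Theory.
Import numFieldNormedType.Exports.
Local Open Scope classical_set_scope.
Local Open Scope ring_scope.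

Section RealAnalysis.
Variable R : realType.
Implicit Types (k dk ddk : R -> R) (a b z L : R).

Lemma continuous_lt_near k z L : {for z, continuous k} -> k z < L ->
  exists2 e, 0 < e & forall y, z - e < y < z + e -> k y < L.
Proof.
move=> kz kzL; move: (kz) => /cvgr_dist_lt /(_ (L - k z)).
rewrite subr_gt0 => /(_ kzL) /nbhs_normP[e /= e0 kL]; exists e => // y yz.
have /kL : `|z - y| < e by rewrite distrC ltr_norml; lra.
rewrite ltr_norml; lra.
Qed.

Lemma itv_shrink a z e : a < z -> 0 < e -> exists2 d, 0 < d & d <= e /\ a <= z - d.
Proof.
move=> az e0; exists (Num.min e (z - a)); first by rewrite lt_min e0 subr_gt0.
by rewrite !ge_min lexx /= lerBrDl -lerBrDr ge_min lexx orbT.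
Qed.

Lemma is_derive_continuous k (x l : R) : is_derive x 1 k l -> {for x, continuous k}.
Proof. by case=> kx _; apply/differentiable_continuous; rewrite -derivable1_diffP. Qed.

Lemma is_derive_within_continuous k dk a b :
  (forall x, a <= x <= b -> is_derive x 1 k (dk x)) -> {within `[a, b], continuous k}.
Proof.
move=> D; apply: derivable_within_continuous => x; rewrite in_itv /= => /D.
by case.
Qed.

Lemma MVT_lt_lower k dk a b L : a < b ->
  (forall x, a < x < b -> is_derive x 1 k (dk x)) -> {within `[a, b], continuous k} ->
  (forall x, a < x < b -> L < dk x) -> k a + L * (b - a) < k b.
Proof.
move=> ab D C H.
have D' x : x \in `]a, b[ -> is_derive x 1 k (dk x) by rewrite in_itv => /D.
have [c /[!in_itv]/= /H dkc e] := MVT ab D' C.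
have : L * (b - a) < dk c * (b - a) by rewrite ltr_pM2r ?subr_gt0.
lra.
Qed.

Lemma MVT_lt_upper k dk a b L : a < b ->
  (forall x, a < x < b -> is_derive x 1 k (dk x)) -> {within `[a, b], continuous k} ->
  (forall x, a < x < b -> dk x < L) -> k b < k a + L * (b - a).
Proof.
move=> ab D C H.
have D' x : x \in `]a, b[ -> is_derive x 1 k (dk x) by rewrite in_itv => /D.
have [c /[!in_itv]/= /H dkc e] := MVT ab D' C.
have : dk c * (b - a) < L * (b - a) by rewrite ltr_pM2r ?subr_gt0.
lra.
Qed.

Lemma MVT_le_upper k dk a b L : a < b ->
  (forall x, a < x < b -> is_derive x 1 k (dk x)) -> {within `[a, b], continuous k} ->
  (forall x, a < x < b -> dk x <= L) -> k b <= k a + L * (b - a).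
Proof.
move=> ab D C H.
have D' x : x \in `]a, b[ -> is_derive x 1 k (dk x) by rewrite in_itv => /D.
have [c /[!in_itv]/= /H dkc e] := MVT ab D' C.
have : dk c * (b - a) <= L * (b - a) by rewrite ler_pM2r ?subr_gt0.
lra.
Qed.

Lemma derive_local_min_eq0 k dk z a b : a < z < b ->
  (forall y, a < y < b -> is_derive y 1 k (dk y)) ->
  (forall y, a < y < b -> k z <= k y) -> dk z = 0.
Proof.
move=> zab D M.
have Dz := D z zab.
have D0 : is_derive z 1 k (0 : R).
  apply: (@derive1_at_min _ k a b).
  - by case/andP: zab => az zb; exact: ltW (lt_trans az zb).
  - by move=> t; rewrite in_itv => /D [].
  - by rewrite in_itv.
  - by move=> t; rewrite in_itv => /M.
by rewrite -(@derive_val _ _ _ _ _ _ _ Dz) derive_val.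
Qed.

Lemma derive_lt0_near k dk z a b : a < z < b ->
  (forall y, a < y < b -> is_derive y 1 k (dk y)) -> {for z, continuous dk} -> dk z < 0 ->
  exists2 e, 0 < e &
    forall y, (z < y < z + e -> k y < k z) /\ (z - e < y < z -> k z < k y).
Proof.
move=> /andP[az zb] D dkz dkz0.
have [e0 e00 dk_neg] := continuous_lt_near dkz dkz0.
pose e := Num.min e0 (Num.min (z - a) (b - z)).
have [ee0 eza ebz] : [/\ e <= e0, e <= z - a & e <= b - z].
  by rewrite /e !ge_min !lexx ?orbT.
have decr u v : z - e < u -> u < v -> v < z + e -> k v < k u.
  move=> eu uv ve; have := @MVT_lt_upper k dk u v 0 uv.
  rewrite mul0r addr0; apply.
  - by move=> x /andP[? ?]; apply: D; lra.
  - by apply: is_derive_within_continuous => x /andP[? ?]; apply: D; lra.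
  - by move=> x /andP[? ?]; apply: dk_neg; lra.
exists e; first by rewrite /e !lt_min e00 !subr_gt0 az zb.
by move=> y; split=> /andP[? ?]; apply: decr; lra.
Qed.

Lemma derive2_lt0_not_local_min k dk ddk z a b : a < z < b ->
  (forall y, a < y < b -> is_derive y 1 k (dk y)) ->
  (forall y, a < y < b -> is_derive y 1 dk (ddk y)) ->
  {for z, continuous ddk} -> dk z = 0 -> ddk z < 0 ->
  exists2 y, a < y < b & k y < k z.
Proof.
move=> zab D DD ddkz dkz0 ddkz0; have /andP[az zb] := zab.
have [e e0 dk_sign] := derive_lt0_near zab DD ddkz ddkz0.
pose e' := Num.min e (b - z).
have [e'0 e'e e'b] : [/\ 0 < e', e' <= e & e' <= b - z].
  by rewrite /e' lt_min e0 subr_gt0 zb !ge_min !lexx ?orbT.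
exists (z + e' / 2); first lra.
have := @MVT_lt_upper k dk z (z + e' / 2) 0 ltac:(lra).
rewrite mul0r addr0; apply.
- by move=> x /andP[? ?]; apply: D; lra.
- by apply: is_derive_within_continuous => x /andP[? ?]; apply: D; lra.
- by move=> x /andP[? ?]; rewrite -dkz0; apply: (dk_sign x).1; lra.
Qed.

Lemma derive2_gt0_not_local_max k dk ddk z a b : a < z < b ->
  (forall y, a < y < b -> is_derive y 1 k (dk y)) ->
  (forall y, a < y < b -> is_derive y 1 dk (ddk y)) ->
  {for z, continuous ddk} -> dk z = 0 -> 0 < ddk z ->
  exists2 y, a < y < b & k z < k y.
Proof.
move=> zab D DD ddkz dkz0 ddkz0.
suff [y yab ky] : exists2 y, a < y < b & - k y < - k z by exists y; rewrite // -ltrN2.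
apply: (@derive2_lt0_not_local_min _ (fun x => - dk x) (fun x => - ddk x)) zab _ _ _ _ _.
- by move=> y /D; exact: is_deriveN.
- by move=> y /DD; exact: is_deriveN.
- exact: continuousN.
- by rewrite dkz0 oppr0.
- by rewrite oppr_lt0.
Qed.

Lemma is_derive_expR_lin (a x : R) :
  is_derive x 1 (fun y => expR (- (a * y))) (- a * expR (- (a * x))).
Proof.
have lin : is_derive x 1 (fun y : R => - (a * y)) (- a).
  by have := is_deriveN (is_deriveZ a (is_derive_id x 1)); rewrite [a *: 1]mulr1.
by rewrite mulrC; apply: (is_derive1_comp (is_derive_expR _) lin).
Qed.

Definition halfline_continuous k := forall B, 0 < B -> {within `[0, B], continuous k}.

Lemma halfline_continuous_at k x : halfline_continuous k -> 0 < x -> {for x, continuous k}.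
Proof.
move=> kc x0; have x1 : 0 < x + 1 by lra.
have [kx _ _] := (continuous_within_itvP k x1).1 (kc _ x1).
by apply: kx; rewrite in_itv /=; lra.
Qed.

Lemma halfline_continuous_within k u v : halfline_continuous k -> 0 <= u -> 0 < v ->
  {within `[u, v], continuous k}.
Proof.
move=> kc u0 v0; apply: continuous_subspaceW (kc v v0) => y /=.
by rewrite !in_itv /= => /andP[? ?]; lra.
Qed.

Lemma halfline_continuousN k : halfline_continuous k -> halfline_continuous (fun y => - k y).
Proof. by move=> kc B B0 x; apply: continuousN; exact: kc. Qed.

Lemma halfline_continuous_lt_near0 k L : halfline_continuous k -> k 0 < L ->
  exists2 e, 0 < e & forall y, 0 <= y < e -> k y < L.
Proof.
move=> kc kL; have [_ + _] := (continuous_within_itvP k ltr01).1 (kc 1 ltr01).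
move=> /cvgr_dist_lt /(_ (L - k 0)); rewrite subr_gt0 => /(_ kL).
rewrite near_withinE => /nbhs_normP[e /= e0 ke]; exists e => // y /andP[y0 ye].
move: y0; rewrite le_eqVlt => /predU1P[<- //|y0].
have := ke y; rewrite /ball_ /= sub0r normrN ger0_norm ?(ltW y0) // => /(_ ye y0).
rewrite ltr_norml; lra.
Qed.

End RealAnalysis.

Section Sobolev.
Variable R : realType.
Local Notation mu := (@lebesgue_measure R).

Lemma ae_exists_in_itv (P : R -> Prop) (u v : R) : u < v -> {ae mu, forall x, P x} ->
  exists y, u < y < v /\ P y.
Proof.
move=> uv [N [mN N0 notPN]]; apply: contrapT => noP.
have sub : `]u, v[%classic `<=` N.
  move=> y; rewrite /= in_itv /= => yuv; apply: notPN => Py; apply: noP; exists y; split => //.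
have := @le_measure _ _ _ mu `]u, v[%classic N.
rewrite !inE => /(_ (measurable_itv _) mN sub) le_N.
have : (mu `]u, v[%classic <= 0)%E.
  by apply: le_trans le_N _; rewrite le_eqVlt; apply/orP; left; apply/eqP; exact: N0.
by rewrite lebesgue_measure_itv /= lte_fin uv lee_fin subr_le0 leNgt uv.
Qed.

Lemma primitive_halfline_continuous (F k : R -> R) (c : R) :
  (forall x, 0 <= x -> mu.-integrable `[0, x] (fun t => (k t)%:E)) ->
  (forall x, 0 <= x -> F x = c + Rintegral mu `[0, x] k) -> halfline_continuous F.
Proof.
move=> kI Fk B B0.
have I := parameterized_integral_continuous (ltW B0) (kI _ (ltW B0)).
move: I; move eqG : (fun t => parameterized_integral mu 0 t k) => G I.
have cI : {within `[0, B], continuous (fun t => c + G t)}.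
  by move=> x; apply: continuousD; [exact: cvg_cst | exact: I].
apply: subspace_eq_continuous cI => x; rewrite inE /= in_itv /= => /andP[x0 _].
by change (c + G x = F x); rewrite Fk // -eqG.
Qed.

Lemma is_derive_primitive (F k : R -> R) (a b c x : R) : a < x < b ->
  mu.-integrable `[a, b] (EFin \o k) ->
  (forall t, a <= t <= b -> F t = c + Rintegral mu `[a, t] k) ->
  {for x, continuous k} -> is_derive x 1 F (k x).
Proof.
move=> /andP[ax xb] kI Fk kx.
have [dG G'] := continuous_FTC1_closed xb kI ax kx.
have DG : is_derive x 1 (fun t => Rintegral mu `[a, t] k) (k x).
  by have := derivableP dG; rewrite -derive1E G'.
have := is_deriveD (is_derive_cst c x 1) DG; rewrite add0r => D.
apply: near_eq_is_derive D; apply/nbhs_normP.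
exists (Num.min (x - a) (b - x)) => /=; first by rewrite lt_min !subr_gt0 ax xb.
move=> t; rewrite /ball_ /= lt_min !ltr_norml => /andP[/andP[? ?] /andP[? ?]].
by rewrite Fk //; apply/andP; split; lra.
Qed.

Lemma primitive_ae_eq (F w k : R -> R) (c a b : R) : 0 <= a ->
  (forall x, 0 <= x -> mu.-integrable `[0, x] (fun t => (w t)%:E)) ->
  (forall x, 0 <= x -> F x = c + Rintegral mu `[0, x] w) ->
  mu.-integrable `[a, b] (EFin \o k) ->
  {ae mu, forall x, a <= x <= b -> w x = k x} ->
  forall t, a <= t <= b -> F t = F a + Rintegral mu `[a, t] k.
Proof.
move=> a0 wI Fw kI wk t /andP[a_t t_b].
have t0 : 0 <= t by lra.
have wIat : mu.-integrable `[a, t] (EFin \o w).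
  by apply: integrableS (wI t t0) => //; apply: subset_itvr; rewrite bnd_simp.
have kIat : mu.-integrable `[a, t] (EFin \o k).
  by apply: integrableS kI => //; apply: subset_itvl; rewrite bnd_simp.
have split_w : Rintegral mu `[0, t] w - Rintegral mu `[0, a] w = Rintegral mu `[a, t] w.
  have wIot : mu.-integrable `]a, t] (EFin \o w).
    by apply: integrableS (wI t t0) => //; apply: subset_itvr; rewrite bnd_simp.
  rewrite -(Rintegral_itv_obnd_cbnd wIot).
  by apply: Rintegral_itvB (wI t t0) _ _; rewrite bnd_simp.
have w_k : Rintegral mu `[a, t] w = Rintegral mu `[a, t] k.
  rewrite /Rintegral; congr fine; apply: ae_eq_integral => //.
  - exact: measurable_int wIat.
  - exact: measurable_int kIat.
  - move: wk; apply: filterS; first exact: (ae_filter_ringOfSetsType mu).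
    move=> x wkx /=; rewrite in_itv /= => /andP[? ?]; congr EFin; apply: wkx; lra.
rewrite (Fw t t0) (Fw a a0) -w_k -split_w; ring.
Qed.

Lemma is_derive_of_ae_eq (F w k : R -> R) (c u v : R) : 0 <= u ->
  (forall x, 0 <= x -> mu.-integrable `[0, x] (fun t => (w t)%:E)) ->
  (forall x, 0 <= x -> F x = c + Rintegral mu `[0, x] w) ->
  (forall x, u < x < v -> {for x, continuous k}) ->
  {ae mu, forall x, u < x < v -> w x = k x} ->
  forall y, u < y < v -> is_derive y 1 F (k y).
Proof.
move=> u0 wI Fw kc wk y /andP[uy yv].
pose a := (u + y) / 2; pose b := (y + v) / 2.
have [ua ay yb bv] : [/\ u < a, a < y, y < b & b < v] by rewrite /a /b; split; lra.
have kI : mu.-integrable `[a, b] (EFin \o k).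
  apply: continuous_compact_integrable; first exact: segment_compact.
  apply: continuous_in_subspaceT => x; rewrite inE /= in_itv /= => /andP[? ?].
  by apply: kc; lra.
apply: (@is_derive_primitive F k a b (F a)); first by rewrite ay yb.
- exact: kI.
- apply: primitive_ae_eq wI Fw kI _; first lra.
  move: wk; apply: filterS; first exact: (ae_filter_ringOfSetsType mu).
  by move=> x wkx /andP[? ?]; apply: wkx; lra.
- by apply: kc; lra.
Qed.

Lemma W2loc_repr_C1 (v d w : R -> R) : W2loc_repr v d w ->
  [/\ forall x : R, 0 < x -> is_derive x 1 v (d x), halfline_continuous v &
      halfline_continuous d].
Proof.
move=> [_ [_ W]].
have dc : halfline_continuous d.
  by apply: (@primitive_halfline_continuous _ w (d 0)) => x /W[] // _ [] _ [].
have dI (x : R) : 0 <= x -> mu.-integrable `[0, x] (fun t => (d t)%:E) by move=> /W[_ []].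
have vd (x : R) : 0 <= x -> v x = v 0 + Rintegral mu `[0, x] d by move=> /W[_ [_ []]].
split=> //; last exact: primitive_halfline_continuous dI vd.
move=> x x0; apply: (@is_derive_primitive v d 0 (x + 1) (v 0)); first lra.
- by apply: dI; lra.
- by move=> t /andP[t0 _]; apply: vd.
- exact: halfline_continuous_at.
Qed.

Lemma W2loc_repr_is_derive_ae (v d w k : R -> R) (u u' : R) : W2loc_repr v d w -> 0 <= u ->
  (forall x, u < x < u' -> {for x, continuous k}) ->
  {ae mu, forall x, u < x < u' -> w x = k x} ->
  forall y, u < y < u' -> is_derive y 1 d (k y).
Proof.
move=> [_ [_ W]] u0; apply: (@is_derive_of_ae_eq d w k (d 0)) => // x.
- by move=> /W[].
- by move=> /W[_ [_ []]].
Qed.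

End Sobolev.

Section OpT.
Variables (R : realType) (b : R).
Implicit Types (q : R -> R) (y : R).

Lemma op_T_le1 q y : q y <= 1 -> op_T b q y = 1 - q y.
Proof. by move=> q1; rewrite /op_T max_l ?subr_ge0 //; ring. Qed.

Lemma op_T_ge1 q y : 1 <= q y -> op_T b q y = b * (1 - q y).
Proof. by move=> q1; rewrite /op_T max_r ?subr_le0 //; ring. Qed.

Lemma op_T_le1_of_ge0 q y : 0 <= b -> 0 <= q y -> op_T b q y <= 1.
Proof.
move=> b0 q0; have [q1|q1] := lerP (q y) 1; first by rewrite op_T_le1 //; lra.
rewrite op_T_ge1 ?(ltW q1) //; have : 0 <= b * (q y - 1) by rewrite mulr_ge0 // subr_ge0 ltW.
lra.
Qed.

Lemma op_T_continuous q x : {for x, continuous q} -> {for x, continuous (op_T b q)}.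
Proof.
move=> qx; have qx' : {for x, continuous (fun y => 1 - q y)}.
  by apply: continuousB => //; exact: cvg_cst.
apply: continuousD; first by apply: continuousM => //; exact: cvg_cst.
apply: continuousM; first exact: cvg_cst.
exact: (@continuous_max _ _ (fun y => 1 - q y) (cst 0) x qx' (cvg_cst _)).
Qed.

End OpT.

Section Supersolution.
Variable R : realType.
Variables (m sigma r cbar : R).

Definition decay_rate : R := 1 + (m + r) / (2^-1 * sigma ^+ 2).
Definition supersolution (x : R) : R := cbar / r * (1 - expR (- (decay_rate * x))).
Definition derive_bound : R := Num.max 1 (cbar / r * decay_rate).
Definition ode_derive2 (b c : R) (f p : R -> R) (x : R) : R :=
  (2^-1 * sigma ^+ 2)^-1 * (r * f x - m * p x - c * op_T b p x).

Definition value_bounds (f p : R -> R) : Prop :=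
  [/\ forall x : R, 0 < x -> is_derive x 1 f (p x), halfline_continuous f, f 0 = 0 &
      forall x, 0 <= x -> 0 <= f x <= supersolution x /\ 0 <= p x <= derive_bound].

Lemma ode_derive2_continuous b c f p x : {for x, continuous f} -> {for x, continuous p} ->
  {for x, continuous (ode_derive2 b c f p)}.
Proof.
move=> fx px; apply: continuousM; first exact: cvg_cst.
apply: continuousB; first apply: continuousB.
- by apply: continuousM => //; exact: cvg_cst.
- by apply: continuousM => //; exact: cvg_cst.
- by apply: continuousM; [exact: cvg_cst | exact: op_T_continuous].
Qed.

Hypotheses (sigma_gt0 : 0 < sigma) (r_gt0 : 0 < r) (m_ge0 : 0 <= m) (cbar_gt0 : 0 < cbar).

Local Notation S := (2^-1 * sigma ^+ 2).
Local Notation la := decay_rate.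

Lemma half_sqr_gt0 : 0 < S. Proof. by rewrite mulr_gt0 ?invr_gt0 ?exprn_gt0. Qed.

Lemma decay_rate_ge1 : 1 <= la.
Proof.
by rewrite lerDl divr_ge0 ?addr_ge0 ?(ltW half_sqr_gt0) ?(ltW r_gt0).
Qed.

Lemma decay_rate_supersolution : 0 <= S * la ^+ 2 - m * la - r.
Proof.
have Sla : S * la = S + m + r.
  by rewrite /decay_rate; field; exact: lt0r_neq0.
have -> : S * la ^+ 2 - m * la - r = (la - 1) * (S + r) + S.
  by rewrite expr2 mulrA Sla; ring.
apply: addr_ge0 (ltW half_sqr_gt0); apply: mulr_ge0; first by rewrite subr_ge0 decay_rate_ge1.
exact: addr_ge0 (ltW half_sqr_gt0) (ltW r_gt0).
Qed.

Lemma expR_decay_le1 (x : R) : 0 <= x -> expR (- (la * x)) <= 1.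
Proof.
move=> x0; rewrite expR_le1 oppr_le0 mulr_ge0 //.
by have := decay_rate_ge1; lra.
Qed.

Lemma supersolution_ge0 (x : R) : 0 <= x -> 0 <= supersolution x.
Proof.
move=> x0; rewrite mulr_ge0 ?divr_ge0 ?(ltW cbar_gt0) ?(ltW r_gt0) //.
by have := expR_decay_le1 x0; lra.
Qed.

Lemma supersolution_le_linear (x : R) : 0 <= x -> supersolution x <= cbar / r * la * x.
Proof.
move=> x0; rewrite -mulrA ler_wpM2l ?divr_ge0 ?(ltW cbar_gt0) ?(ltW r_gt0) //.
by have := expR_ge1Dx (- (la * x)); lra.
Qed.

Lemma supersolution_lt_cbar (x : R) : r * supersolution x < cbar.
Proof.
have rA : r * (cbar / r) = cbar by rewrite mulrCA divff ?mulr1 // lt0r_neq0.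
rewrite /supersolution mulrA rA mulrBr mulr1.
have : 0 < cbar * expR (- (la * x)) by rewrite mulr_gt0 // expR_gt0.
lra.
Qed.

Lemma derive_bound_ge1 : 1 <= derive_bound.
Proof. by rewrite le_max lexx. Qed.

Lemma derive_bound_ge_slope : cbar / r * la <= derive_bound.
Proof. by rewrite le_max lexx orbT. Qed.

Lemma value_bounds0 : value_bounds (fun=> 0) (fun=> 0).
Proof.
split=> // [x _|B _|x x0]; first exact: is_derive_cst.
- by apply: continuous_subspaceT => y; exact: cvg_cst.
- by rewrite lexx supersolution_ge0 // (le_trans ler01 derive_bound_ge1).
Qed.

End Supersolution.

Section Comparison.
Variable R : realType.
Variables (m sigma r cbar b c : R).
Implicit Types (x y u v : R).
Hypotheses (sigma_gt0 : 0 < sigma) (r_gt0 : 0 < r) (cbar_gt0 : 0 < cbar)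
  (cbar_le_m : cbar <= m) (b_ge0 : 0 <= b) (b_le1 : b <= 1) (c_ge0 : 0 <= c)
  (c_le_cbar : c <= cbar).

Local Notation S := (2^-1 * sigma ^+ 2).
Local Notation la := (decay_rate m sigma r).
Local Notation V := (supersolution m sigma r cbar).
Local Notation K := (derive_bound m sigma r cbar).

Variables (f p g dg : R -> R).
Local Notation h := (ode_derive2 m sigma r b c f p).

Hypotheses (f_derive : forall x, 0 < x -> is_derive x 1 f (p x))
  (f_cont : halfline_continuous f) (p_cont : halfline_continuous p) (f0 : f 0 = 0)
  (f_ub : exists M, forall x, 0 <= x -> f x <= M)
  (g_bounds : value_bounds m sigma r cbar g dg)
  (f_not_below : forall u v, 0 <= u -> u < v -> ~ (forall y, u < y < v -> f y < g y))
  (p_derive_continuation : forall u v, 0 <= u -> u < v -> (forall y, u < y < v -> g y < f y) ->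
     forall y, u < y < v -> is_derive y 1 p (h y)).

Let S0 : 0 < S := half_sqr_gt0 sigma_gt0.

Let m_ge0 : 0 <= m := le_trans (ltW cbar_gt0) cbar_le_m.

Let g_derive x : 0 < x -> is_derive x 1 g (dg x).
Proof. by case: g_bounds => + _ _ _; apply. Qed.

Let g_cont : halfline_continuous g. Proof. by case: g_bounds. Qed.

Let g0 : g 0 = 0. Proof. by case: g_bounds. Qed.

Let g_range x : 0 <= x -> 0 <= g x <= V x.
Proof. by case: g_bounds => _ _ _ /(_ x) gx /gx[]. Qed.

Let ode_derive2_cont x : 0 < x -> {for x, continuous h}.
Proof.
by move=> x0; apply: ode_derive2_continuous; exact: halfline_continuous_at x0.
Qed.

Let dg_range x : 0 <= x -> 0 <= dg x <= K.
Proof. by case: g_bounds => _ _ _ /(_ x) gx /gx[]. Qed.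

Lemma obstacle_le_value x : 0 <= x -> g x <= f x.
Proof.
rewrite le_eqVlt => /predU1P[<-|x0]; first by rewrite f0 g0.
rewrite leNgt; apply/negP => fg.
have fgx : {for x, continuous (fun y => f y - g y)}.
  by apply: continuousB; apply: halfline_continuous_at x0.
have [e e0 fg_neg] := @continuous_lt_near _ _ x 0 fgx ltac:(rewrite /=; lra).
have [d d0 [de dx]] := itv_shrink x0 e0.
apply: (@f_not_below (x - d) (x + d) dx); first lra.
by move=> y yx; have /= := fg_neg y ltac:(lra); lra.
Qed.

Lemma value_ge0 x : 0 <= x -> 0 <= f x.
Proof. by move=> x0; have [g0x _] := andP (g_range x0); have := obstacle_le_value x0; lra. Qed.

Lemma lt_obstacle_near x : 0 < x -> g x < f x ->
  exists2 e, 0 < e & 0 <= x - e /\ forall y, x - e < y < x + e -> g y < f y.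
Proof.
move=> x0 gf.
have gfx : {for x, continuous (fun y => g y - f y)}.
  by apply: continuousB; apply: halfline_continuous_at x0.
have [e e0 gf_neg] := @continuous_lt_near _ _ x 0 gfx ltac:(rewrite /=; lra).
have [d d0 [de dx]] := itv_shrink x0 e0.
by exists d => //; split=> // y yx; have /= := gf_neg y ltac:(lra); lra.
Qed.

Lemma continuation_derive x : 0 < x -> g x < f x -> is_derive x 1 p (h x).
Proof.
move=> x0 gf; have [e e0 [ex gf_near]] := lt_obstacle_near x0 gf.
by apply: (@p_derive_continuation (x - e) (x + e) ex _ gf_near x); lra.
Qed.

Lemma contact_derive_eq x : 0 < x -> f x = g x -> p x = dg x.
Proof.
move=> x0 fgx; apply/eqP; rewrite -subr_eq0; apply/eqP.
apply: (@derive_local_min_eq0 _ (fun y => f y - g y) (fun y => p y - dg y) x 0 (2 * x)).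
  lra.
- by move=> y /andP[y0 _]; exact: is_deriveB (f_derive y0) (g_derive y0).
- by move=> y /andP[y0 _]; have := obstacle_le_value (ltW y0); lra.
Qed.

Lemma lt_obstacle_of_derive x : 0 < x -> ~ (0 <= p x <= K) -> g x < f x.
Proof.
move=> x0 px; rewrite lt_neqAle obstacle_le_value ?(ltW x0) // andbT.
by apply/eqP => gf; apply: px; rewrite contact_derive_eq // dg_range // ltW.
Qed.

Lemma derive0_ge0 : 0 <= p 0.
Proof.
rewrite leNgt; apply/negP => p0.
have [e e0 p_neg] := halfline_continuous_lt_near0 p_cont p0.
have : f (e / 2) < 0.
  have := @MVT_lt_upper _ f p 0 (e / 2) 0; rewrite f0 mul0r addr0; apply; first lra.
  - by move=> x /andP[x0 _]; exact: f_derive.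
  - by apply: f_cont; lra.
  - by move=> x /andP[? ?]; apply: p_neg; lra.
by have := @value_ge0 (e / 2) ltac:(lra); lra.
Qed.

Lemma no_negative_local_min z u v : 0 < z -> u < z < v -> p z < 0 ->
  ~ (forall y, u < y < v -> p z <= p y).
Proof.
move=> z0 /andP[uz zv] pz pmin.
have [e1 e10 p_neg] := continuous_lt_near (halfline_continuous_at p_cont z0) pz.
pose e := Num.min (Num.min e1 z) (Num.min (z - u) (v - z)).
have [e0 ee1 ez ezu ezv] : [/\ 0 < e, e <= e1, e <= z, e <= z - u & e <= v - z].
  by rewrite /e !lt_min e10 z0 !subr_gt0 uz zv !ge_min !lexx ?orbT.
have near_z y : z - e < y < z + e -> [/\ 0 < y, p y < 0 & g y < f y].
  move=> yz; have y0 : 0 < y by lra.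
  have py : p y < 0 by apply: p_neg; lra.
  by split=> //; apply: lt_obstacle_of_derive => // /andP[]; lra.
(* Below [1], [op_T b p = 1 - p], so [h] is the affine expression [q] in [f] and [p]. *)
pose q y := S^-1 * (r * f y - c + (c - m) * p y).
have Dp y : z - e < y < z + e -> is_derive y 1 p (q y).
  move=> /[dup] /near_z[y0 py gf] yz.
  have -> : q y = h y by rewrite /ode_derive2 op_T_le1 /q; [congr (_ * _); ring | lra].
  exact: continuation_derive.
pose dq y := S^-1 * (r * p y + (c - m) * q y).
have Dq y : z - e < y < z + e -> is_derive y 1 q (dq y).
  move=> /[dup] /near_z[y0 _ _] yz.
  have := is_deriveZ S^-1 (is_deriveD (is_deriveB (is_deriveZ r (f_derive y0))
    (is_derive_cst c y 1)) (is_deriveZ (c - m) (Dp y yz))).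
  by rewrite /q /dq subr0.
have dq_cont : {for z, continuous dq}.
  apply: continuousM; first exact: cvg_cst.
  apply: continuousD; apply: continuousM; try exact: cvg_cst.
  - exact: halfline_continuous_at p_cont z0.
  - by apply: is_derive_continuous (Dq z _); lra.
have zz : z - e < z < z + e by lra.
have qz0 : q z = 0.
  by apply: (derive_local_min_eq0 zz Dp) => y yz; apply: pmin; lra.
have dqz : dq z < 0 by rewrite /dq qz0 mulr0 addr0 pmulr_rlt0 ?invr_gt0 // pmulr_rlt0.
have [y yz] := derive2_lt0_not_local_min zz Dp Dq dq_cont qz0 dqz.
by have := pmin y ltac:(lra); lra.
Qed.

Lemma derive_le_after_neg x X : 0 <= x -> p x < 0 -> x <= X -> p X <= p x.
Proof.
move=> x0 px xX.
have x_gt0 : 0 < x.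
  rewrite lt_neqAle x0 andbT; apply: contraTneq px => <-.
  by rewrite -leNgt derive0_ge0.
have X0 : 0 < X by lra.
have [z /[!in_itv]/= /andP[z0 zX] zmin] := EVT_min (ltW X0) (p_cont X0).
have pzx : p z <= p x by apply: zmin; rewrite in_itv /=; lra.
have z_gt0 : 0 < z.
  rewrite lt_neqAle z0 andbT; apply: contraTneq pzx => <-.
  by rewrite -ltNge; have := derive0_ge0; lra.
have [zltX|Xlez] := ltrP z X; last by have -> : X = z by apply/eqP; rewrite eq_le Xlez.
exfalso; apply: (@no_negative_local_min z 0 X z_gt0); [lra | lra |].
by move=> y y0X; apply: zmin; rewrite in_itv /=; lra.
Qed.

Lemma derive_ge0 x : 0 <= x -> 0 <= p x.
Proof.
move=> x0; rewrite leNgt; apply/negP => px.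
pose X := x + (f x + 1) / - p x.
have fx0 := value_ge0 x0.
have xX : x < X by rewrite /X ltrDl divr_gt0 //; lra.
have : f X <= f x + p x * (X - x).
  apply: (MVT_le_upper xX).
  - by move=> y /andP[? _]; apply: f_derive; lra.
  - by apply: (halfline_continuous_within f_cont x0); lra.
  - by move=> y /andP[? ?]; apply: derive_le_after_neg; lra.
have -> : f x + p x * (X - x) = -1 by rewrite /X; field; rewrite ltr0_neq0.
by have := @value_ge0 X ltac:(lra); lra.
Qed.

Section Perturbed.
Variable eps : R.
Hypothesis eps_gt0 : 0 < eps.

Let E x := expR (- (la * x)).
Let B := cbar / r + eps * (m / r).
(* [W = V + eps * (x + m / r * (1 - E))]: the [m / r] part cancels the constant
   [- m eps] in the residual of [x], and the linear growth makes [f - W] attain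
   its maximum on [0, +oo[. *)
Let W x := B * (1 - E x) + eps * x.
Let W' x := B * la * E x + eps.
Let W'' x := - (B * la ^+ 2 * E x).

Let B_gt0 : 0 < B.
Proof.
have m0 : 0 < m := lt_le_trans cbar_gt0 cbar_le_m.
by apply: addr_gt0; [exact: divr_gt0 | exact: mulr_gt0 _ (divr_gt0 m0 r_gt0)].
Qed.

Let rB : r * B = cbar + eps * m.
Proof. by rewrite /B; field; exact: lt0r_neq0. Qed.

Let W0 : W 0 = 0.
Proof. by rewrite /W /E mulr0 oppr0 expR0 subrr !mulr0 addr0. Qed.

Let W_derive x : is_derive x 1 W (W' x).
Proof.
have D := is_deriveD (is_deriveZ B (is_deriveB (is_derive_cst (1 : R) x 1)
  (is_derive_expR_lin la x))) (is_deriveZ eps (is_derive_id x 1)).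
have {}D : is_derive x 1 W (B * (0 - - la * E x) + eps * 1) := D.
by apply: is_derive_eq D _; rewrite /W'; ring.
Qed.

Let W'_derive x : is_derive x 1 W' (W'' x).
Proof.
have D := is_deriveD (is_deriveZ (B * la) (is_derive_expR_lin la x)) (is_derive_cst eps x 1).
have {}D : is_derive x 1 W' (B * la * (- la * E x) + 0) := D.
by apply: is_derive_eq D _; rewrite /W''; ring.
Qed.

Let W''_continuous x : {for x, continuous W''}.
Proof.
apply: continuousN; apply: continuousM; first exact: cvg_cst.
exact: is_derive_continuous (is_derive_expR_lin la x).
Qed.

Let W_ge x : 0 <= x -> V x <= W x /\ eps * x <= W x.
Proof.
move=> x0; have E1 : E x <= 1 := expR_decay_le1 sigma_gt0 r_gt0 m_ge0 x0.
have mr0 : 0 <= eps * (m / r) * (1 - E x).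
  by apply: mulr_ge0; [apply: mulr_ge0; [exact: ltW | exact: divr_ge0 (ltW r_gt0)] | lra].
have -> : W x = V x + eps * (m / r) * (1 - E x) + eps * x.
  by rewrite /W /B /E /supersolution; ring.
have := supersolution_ge0 sigma_gt0 r_gt0 m_ge0 cbar_gt0 x0.
have : 0 <= eps * x by rewrite mulr_ge0 // ltW.
split; lra.
Qed.

Let W_supersolution x : 0 <= x -> S * W'' x + c * op_T b W' x <= r * W x - m * W' x.
Proof.
move=> x0.
have -> : r * W x - m * W' x = S * W'' x + (r * B - eps * m) + r * eps * x +
    B * E x * (S * la ^+ 2 - m * la - r) by rewrite /W /W' /W''; ring.
rewrite rB addrK.
have kappa : 0 <= B * E x * (S * la ^+ 2 - m * la - r).
  by rewrite !mulr_ge0 ?(ltW B_gt0) ?expR_ge0 ?decay_rate_supersolution.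
have rex : 0 <= r * eps * x by rewrite !mulr_ge0 ?(ltW r_gt0) ?(ltW eps_gt0).
have T1 : op_T b W' x <= 1.
  apply: op_T_le1_of_ge0 => //; rewrite addr_ge0 ?(ltW eps_gt0) //.
  by rewrite !mulr_ge0 ?(ltW B_gt0) ?expR_ge0 // (le_trans ler01) ?decay_rate_ge1.
have : c * op_T b W' x <= c by rewrite ler_piMr.
have := c_le_cbar.
lra.
Qed.

Let f_sub_W_max : exists2 z, 0 <= z & forall y, 0 <= y -> f y - W y <= f z - W z.
Proof.
have [M fM] := f_ub.
pose X := Num.max 0 (M / eps) + 1.
have [X0 MX] : 0 < X /\ M / eps < X.
  by rewrite /X; have := le_max 0 0 (M / eps); have := le_max (M / eps) 0 (M / eps);
    rewrite !lexx orbT /=; lra.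
have far y : X <= y -> f y - W y < 0.
  move=> Xy; have y0 : 0 <= y by lra.
  have : M < eps * y by rewrite -ltr_pdivrMl //; lra.
  by have := fM y y0; have := (W_ge y0).2; lra.
have Wc : {within `[0, X], continuous W}.
  by apply: continuous_subspaceT => x; exact: is_derive_continuous (W_derive x).
have uc : {within `[0, X], continuous (fun y => f y - W y)}.
  by move=> x; apply: continuousB; [exact: f_cont X0 x | exact: Wc x].
have [z /[!in_itv]/= zX zmax] := EVT_max (ltW X0) uc.
exists z => [|y y0]; first by case/andP: zX.
have [yX|/ltW/far] := lerP y X; first by apply: zmax; rewrite in_itv /= y0.
have := zmax 0; rewrite in_itv /= lexx f0 W0 => /(_ (ltW X0)); lra.
Qed.

Let W''_lt_ode_derive2 z : 0 <= z -> W z < f z -> p z = W' z -> W'' z < h z.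
Proof.
move=> z0 Wf pW.
have Sh : S * h z = r * f z - m * W' z - c * op_T b W' z.
  by rewrite /ode_derive2 mulrA mulfV ?mul1r ?lt0r_neq0 // /op_T pW.
have := W_supersolution z0; rewrite -(ltr_pM2l S0).
have : r * W z < r * f z by rewrite ltr_pM2l.
lra.
Qed.

Lemma value_le_perturbed_supersolution x : 0 <= x ->
  f x <= V x + eps * (m / r * (1 - expR (- (la * x))) + x).
Proof.
move=> x0.
have -> : V x + eps * (m / r * (1 - expR (- (la * x))) + x) = W x.
  by rewrite /W /B /E /supersolution; ring.
rewrite leNgt; apply/negP => Wf.
have [z z0 zmax] := f_sub_W_max.
have Wfz : W z < f z by have := zmax x x0; lra.
have z_gt0 : 0 < z.
  by rewrite lt_neqAle z0 andbT; apply: contraTneq Wfz => <-; rewrite f0 W0 ltxx.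
have gf : g z < f z by have := g_range z0; have := (W_ge z0).1; lra.
have [e e0 [ez gf_near]] := lt_obstacle_near z_gt0 gf.
have zz : z - e < z < z + e by lra.
have Du y : z - e < y < z + e -> is_derive y 1 (fun t => f t - W t) (p y - W' y).
  by move=> yz; apply: is_deriveB (W_derive y); apply: f_derive; lra.
have DDu y : z - e < y < z + e -> is_derive y 1 (fun t => p t - W' t) (h y - W'' y).
  move=> yz; apply: is_deriveB (W'_derive y); apply: continuation_derive; first lra.
  exact: gf_near.
have pW : p z = W' z.
  suff : - (p z - W' z) = 0 by lra.
  apply: (@derive_local_min_eq0 _ (fun t => - (f t - W t)) (fun t => - (p t - W' t))
    z (z - e) (z + e) zz).
  - by move=> y /Du; exact: is_deriveN.
  - by move=> y yz; have := zmax y ltac:(lra); lra.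
have u'z : p z - W' z = 0 by rewrite pW subrr.
have u''z : 0 < h z - W'' z by rewrite subr_gt0; exact: W''_lt_ode_derive2.
have [y yz] := derive2_gt0_not_local_max zz Du DDu
  (continuousB (ode_derive2_cont z_gt0) (@W''_continuous z)) u'z u''z.
by have := zmax y ltac:(lra); lra.
Qed.

End Perturbed.

Lemma value_le_supersolution x : 0 <= x -> f x <= V x.
Proof.
move=> x0; apply/ler_addgt0Pr => e e0.
pose Q := m / r * (1 - expR (- (la * x))) + x.
have Q0 : 0 <= Q.
  have E1 := expR_decay_le1 sigma_gt0 r_gt0 m_ge0 x0.
  apply: addr_ge0 x0; apply: mulr_ge0; [exact: divr_ge0 m_ge0 (ltW r_gt0) | lra].
have eps0 : 0 < e / (Q + 1) by rewrite divr_gt0 //; lra.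
have := value_le_perturbed_supersolution eps0 x0; rewrite -/Q.
have : e / (Q + 1) * Q = e - e / (Q + 1) by field; apply: lt0r_neq0; lra.
lra.
Qed.

Lemma derive0_le_slope : p 0 <= cbar / r * la.
Proof.
rewrite leNgt; apply/negP => p0.
have [e e0 p_big] : exists2 e, 0 < e & forall y, 0 <= y < e -> - p y < - (cbar / r * la).
  by apply: halfline_continuous_lt_near0; [exact: halfline_continuousN | rewrite ltrN2].
have : cbar / r * la * (e / 2) < f (e / 2).
  have := @MVT_lt_lower _ f p 0 (e / 2) (cbar / r * la); rewrite f0 add0r subr0.
  apply; first lra.
  - by move=> x /andP[x0 _]; exact: f_derive.
  - by apply: f_cont; lra.
  - by move=> x /andP[? ?]; have := p_big x ltac:(lra); lra.
have : V (e / 2) <= cbar / r * la * (e / 2) by apply: supersolution_le_linear => //; lra.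
by have := @value_le_supersolution (e / 2) ltac:(lra); lra.
Qed.

Lemma ode_derive2_lt0 x : 0 <= x -> 1 <= p x -> h x < 0.
Proof.
move=> x0 p1.
have : r * V x < cbar by apply: supersolution_lt_cbar.
have : r * f x <= r * V x by rewrite ler_pM2l // value_le_supersolution.
have : 0 <= (m - c * b) * (p x - 1).
  apply: mulr_ge0; last lra.
  have : c * b <= c by rewrite ler_piMr.
  by have := c_le_cbar; have := cbar_le_m; lra.
have := cbar_le_m.
rewrite /ode_derive2 pmulr_rlt0 ?invr_gt0 // op_T_ge1 //.
have -> : r * f x - m * p x - c * (b * (1 - p x)) =
  r * f x - m - (m - c * b) * (p x - 1) by ring.
lra.
Qed.

Lemma derive_le_bound x : 0 <= x -> p x <= K.
Proof.
move=> x0; rewrite leNgt; apply/negP => Kp.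
have K1 : 1 <= K by exact: derive_bound_ge1.
have p0K : p 0 <= K by apply: le_trans derive0_le_slope _; exact: derive_bound_ge_slope.
have x_gt0 : 0 < x.
  by rewrite lt_neqAle x0 andbT; apply: contraTneq Kp => <-; rewrite -leNgt.
have [z /[!in_itv]/= /andP[z0 zx] zmax] := EVT_max (ltW x_gt0) (p_cont x_gt0).
have pz : K < p z by apply: lt_le_trans Kp (zmax _ _); rewrite in_itv /= x0 lexx.
have z_gt0 : 0 < z.
  by rewrite lt_neqAle z0 andbT; apply: contraTneq pz => <-; rewrite -leNgt.
have gf : g z < f z by apply: lt_obstacle_of_derive => // /andP[_]; lra.
have [e e0 [ez gf_near]] := lt_obstacle_near z_gt0 gf.
have zz : z - e < z < z + e by lra.
have Dp y : z - e < y < z + e -> is_derive y 1 p (h y).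
  by move=> yz; apply: continuation_derive; [lra | exact: gf_near].
have hz : h z < 0 by apply: ode_derive2_lt0 => //; lra.
have [e' e'0 p_sign] := derive_lt0_near zz Dp (ode_derive2_cont z_gt0) hz.
pose d := Num.min e' e.
have [d0 de' de] : [/\ 0 < d, d <= e' & d <= e] by rewrite /d lt_min e'0 e0 !ge_min !lexx ?orbT.
have : p z < p (z - d / 2) by apply: (p_sign _).2; lra.
by have := zmax (z - d / 2); rewrite in_itv /= => /(_ ltac:(lra)); lra.
Qed.

Lemma comparison_value_bounds : value_bounds m sigma r cbar f p.
Proof.
split=> // x x0.
by rewrite value_ge0 ?value_le_supersolution ?derive_ge0 ?derive_le_bound.
Qed.

End Comparison.

Section RegimeSwitching.
Variable R : realType.
Local Notation mu := (@lebesgue_measure R).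
Variables (m sigma r cbar b : R).
Hypotheses (sigma_gt0 : 0 < sigma) (r_gt0 : 0 < r) (cbar_gt0 : 0 < cbar)
  (cbar_le_m : cbar <= m) (b_ge0 : 0 <= b) (b_le1 : b <= 1).

Lemma cc_range n i : (0 < n)%N -> (i <= n)%N -> 0 <= cc cbar n i <= cbar.
Proof.
move=> n_gt0 i_le_n; rewrite /cc.
have n0 : 0 < n%:R :> R by rewrite ltr0n.
have step0 : 0 <= cbar / n%:R by rewrite divr_ge0 // ltW.
have : i%:R * (cbar / n%:R) <= n%:R * (cbar / n%:R) by rewrite ler_wpM2r // ler_nat.
have : n%:R * (cbar / n%:R) = cbar by rewrite mulrCA divff ?mulr1 // lt0r_neq0.
have : 0 <= i%:R * (cbar / n%:R) by rewrite mulr_ge0.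
lra.
Qed.

Section Component.
Variables (c : R) (v d w g dg : R -> R).
Hypotheses (c_ge0 : 0 <= c) (c_le_cbar : c <= cbar) (vdw : W2loc_repr v d w)
  (v_bounded : exists M, forall x, 0 <= x -> `|v x| <= M) (v0 : v 0 = 0)
  (v_ae : {ae mu, forall x, 0 < x ->
     Num.min (- gen_L m sigma r v d w x - c * op_T b d x) (v x - g x) = 0}).

Lemma not_below_obstacle u u' : 0 <= u -> u < u' -> ~ (forall y, u < y < u' -> v y < g y).
Proof.
move=> u0 uu' below; have [y [yu /(_ _)/eqP vy]] := ae_exists_in_itv uu' v_ae.
have /vy : 0 < y by lra.
rewrite eq_le => /andP[_]; rewrite le_min => /andP[_].
by have := below y yu; lra.
Qed.

Lemma continuation_is_derive u u' : 0 <= u -> u < u' ->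
  (forall y, u < y < u' -> g y < v y) ->
  forall y, u < y < u' -> is_derive y 1 d (ode_derive2 m sigma r b c v d y).
Proof.
move=> u0 uu' above; have [_ v_cont d_cont] := W2loc_repr_C1 vdw.
apply: (W2loc_repr_is_derive_ae vdw u0).
  move=> x /andP[ux _]; have x0 : 0 < x by lra.
  by apply: ode_derive2_continuous; apply: halfline_continuous_at x0.
move: v_ae; apply: filterS; first exact: (ae_filter_ringOfSetsType mu).
move=> x vx /andP[ux xu']; have /vx : 0 < x by lra.
have vg : 0 < v x - g x by have := above x ltac:(lra); lra.
set L := - gen_L _ _ _ _ _ _ _ - _ => min0.
have L0 : L = 0.
  have [Lvg|vgL] := lerP L (v x - g x); first by rewrite min_l in min0.
  by move: min0; rewrite min_r ?(ltW vgL) //; lra.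
have S0 : 2^-1 * sigma ^+ 2 != 0 by rewrite lt0r_neq0 // half_sqr_gt0.
rewrite /ode_derive2 -[w x](mulKf S0); congr (_ * _).
by move: L0; rewrite /L /gen_L; lra.
Qed.

Lemma component_value_bounds : value_bounds m sigma r cbar g dg ->
  value_bounds m sigma r cbar v d.
Proof.
move=> g_bounds; have [v_derive v_cont d_cont] := W2loc_repr_C1 vdw.
apply: (comparison_value_bounds sigma_gt0 r_gt0 cbar_gt0 cbar_le_m b_ge0 b_le1 c_ge0
  c_le_cbar v_derive v_cont d_cont v0 _ g_bounds not_below_obstacle continuation_is_derive).
by have [M vM] := v_bounded; exists M => x /vM; apply: le_trans (ler_norm _).
Qed.

End Component.

End RegimeSwitching.

Theorem lemma5p8 (R : realType) (m sigma r cbar b : R) :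
  0 < sigma -> 0 < r -> 0 < cbar -> cbar <= m -> 0 <= b -> b <= 1 ->
  sigma ^+ 2 * r < 2 * m * cbar ->
  exists K : R, 0 < K /\
    forall (n : nat) (v d w : nat -> R -> R),
      (0 < n)%N ->
      solves_system m sigma r cbar b n v d w ->
      forall i : nat, (i <= n)%N ->
        forall x : R, 0 <= x -> 0 <= d i x <= K.
Proof.
(* The bound [derive_bound] does not need [sigma ^+ 2 * r < 2 * m * cbar]. *)
move=> sigma_gt0 r_gt0 cbar_gt0 cbar_le_m b_ge0 b_le1 _.
exists (derive_bound m sigma r cbar).
split; first by apply: lt_le_trans ltr01 _; exact: derive_bound_ge1.
move=> n v d w n_gt0 sol.
have bounds i : (i <= n)%N -> value_bounds m sigma r cbar (v i) (d i).
  elim: i => [|i IH] i_le_n; have [vdw [v_bdd [v0 v_ae]]] := sol _ i_le_n;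
    have /andP[c_ge0 c_le_cbar] := cc_range cbar_gt0 n_gt0 i_le_n;
    apply: (component_value_bounds sigma_gt0 r_gt0 cbar_gt0 cbar_le_m b_ge0 b_le1
      c_ge0 c_le_cbar vdw v_bdd v0 v_ae).
  - exact: value_bounds0 sigma_gt0 r_gt0 (le_trans (ltW cbar_gt0) cbar_le_m) cbar_gt0.
  - exact: IH (ltnW i_le_n).
by move=> i i_le_n x x0; have [_ _ _ /(_ x x0) []] := bounds i i_le_n.
Qed.
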